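(* Let $x_0 \in \mathbb R^{n_x}$, and let $u_0 \in \mathbb R^{n_u} \times \{0,1\}^{m_u}$ be any input with $(x_0, u_0) \in \mathcal D$. Let $x_1 := A x_0 + B u_0$. Then $\theta(x_1) \ge \theta(x_0) - |Q x_0|^2 - |R u_0|^2$ (with the convention $\infty - c = \infty$ for real $c$).
   Context: Fix integers $n_x, n_u, m_u \ge 0$ and $T \ge 1$. Let $A \in \mathbb R^{n_x \times n_x}$, $B \in \mathbb R^{n_x \times (n_u+m_u)}$, and let $F, G, h$ define the polyhedron $\mathcal D = \{(x,u) \in \mathbb R^{n_x} \times \mathbb R^{n_u+m_u} : F x + G u \le h\}$, assumed to contain the origin. Input vectors $u \in \mathbb R^{n_u+m_u}$ have $n_u$ continuous and $m_u$ binary entries; $V$ is the selection matrix with $V u$ equal to the binary entries. Let $Q$ (with $n_x$ columns) and $R$ (with $n_u+m_u$ columns) be weight matrices, possibly rank deficient. For $\xi \in \mathbb R^{n_x}$, $\theta(\xi) \in \mathbb R_{\ge 0} \cup \{\infty\}$ denotes the optimal value ($\infty$ if infeasible) of the mixed-integer quadratic program: minimize $\sum_{t=0}^T |Q x_t|^2 + \sum_{t=0}^{T-1} |R u_t|^2$ over $x_0, \ldots, x_T \in \mathbb R^{n_x}$, $u_0, \ldots, u_{T-1} \in \mathbb R^{n_u+m_u}$ subject to $x_0 = \xi$, $x_{t+1} = A x_t + B u_t$, $(x_t, u_t) \in \mathcal D$, and $V u_t \in \{0,1\}^{m_u}$ for $t = 0, \ldots, T-1$. $|\cdot|$ is the Euclidean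 norm. *)

From HB Require Import structures.
From mathcomp Require Import all_boot all_order all_algebra.
From mathcomp Require Import boolp classical_sets reals constructive_ereal ereal.
Set Implicit Arguments. Unset Strict Implicit. Unset Printing Implicit Defensive.
Import Order.TTheory GRing.Theory Num.Theory.
Local Open Scope ring_scope.
Local Open Scope classical_set_scope.

Definition sqnorm (K : realType) (n : nat) (v : 'cV[K]_n) : K :=
  \sum_(i < n) v i 0 ^+ 2.

Definition vle (K : realType) (n : nat) (v w : 'cV[K]_n) : Prop :=
  forall i, v i 0 <= w i 0.

Definition inD (K : realType) (nx nu mu p : nat)
  (F : 'M[K]_(p, nx)) (G : 'M[K]_(p, nu + mu)) (h : 'cV[K]_p)
  (x : 'cV[K]_nx) (u : 'cV[K]_(nu + mu)) : Prop :=
  vle (F *m x + G *m u) h.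

(* V u : the last mu entries of u (the binary ones) *)
Definition selV (K : realType) (nu mu : nat) (u : 'cV[K]_(nu + mu)) : 'cV[K]_mu :=
  dsubmx u.

Definition binary_vec (K : realType) (m : nat) (v : 'cV[K]_m) : Prop :=
  forall i, v i 0 = 0 \/ v i 0 = 1.

Definition feasible (K : realType) (nx nu mu p : nat)
  (A : 'M[K]_nx) (B : 'M[K]_(nx, nu + mu))
  (F : 'M[K]_(p, nx)) (G : 'M[K]_(p, nu + mu)) (h : 'cV[K]_p) (T : nat)
  (xi : 'cV[K]_nx) (xs : nat -> 'cV[K]_nx) (us : nat -> 'cV[K]_(nu + mu)) : Prop :=
  xs 0%N = xi /\
  forall t, (t < T)%N ->
    [/\ xs t.+1 = A *m xs t + B *m us t,
        inD F G h (xs t) (us t) &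
        binary_vec (selV (us t))].

Definition cost (K : realType) (nx nu mu q r : nat)
  (Q : 'M[K]_(q, nx)) (Rw : 'M[K]_(r, nu + mu)) (T : nat)
  (xs : nat -> 'cV[K]_nx) (us : nat -> 'cV[K]_(nu + mu)) : K :=
  \sum_(t < T.+1) sqnorm (Q *m xs t) + \sum_(t < T) sqnorm (Rw *m us t).

(* optimal value theta(xi) of the MIQP, +oo if infeasible (inf of empty set) *)
Definition theta (K : realType) (nx nu mu p q r : nat)
  (A : 'M[K]_nx) (B : 'M[K]_(nx, nu + mu))
  (F : 'M[K]_(p, nx)) (G : 'M[K]_(p, nu + mu)) (h : 'cV[K]_p)
  (Q : 'M[K]_(q, nx)) (Rw : 'M[K]_(r, nu + mu)) (T : nat)
  (xi : 'cV[K]_nx) : \bar K :=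
  ereal_inf [set c : \bar K | exists xs us,
     feasible A B F G h T xi xs us /\ c = (cost Q Rw T xs us)%:E].

From HB Require Import structures.
From mathcomp Require Import all_boot all_order all_algebra.
From mathcomp Require Import boolp classical_sets reals constructive_ereal ereal.
Set Implicit Arguments. Unset Strict Implicit.
Import Order.TTheory GRing.Theory Num.Theory.

(* Prepending (x0, u0) to a feasible trajectory from x1 gives a feasible
   trajectory from x0.  Read with horizon T it omits the last state and input of
   the original one, whose costs are nonnegative, hence
   theta x0 <= |Q x0|^2 + |R u0|^2 + cost of any feasible trajectory from x1. *)

Local Open Scope ring_scope.

Definition prepend (T : Type) (a : T) (s : nat -> T) : nat -> T :=
  fun t => if t is t'.+1 then s t' else a.

Lemma sqnorm_ge0 (K : realType) n (v : 'cV[K]_n) : 0 <= sqnorm v.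
Proof. by apply: sumr_ge0 => i _; apply: sqr_ge0. Qed.

Lemma sum_prepend_le (R : numDomainType) (T : Type) (g : T -> R)
    (a : T) (s : nat -> T) n :
  (forall x, 0 <= g x) ->
  \sum_(t < n) g (prepend a s t) <= g a + \sum_(t < n) g (s t).
Proof.
move=> g_ge0; case: n => [|n]; first by rewrite !big_ord0 addr0.
by rewrite big_ord_recl lerD2l [leRHS]big_ord_recr ler_wpDr.
Qed.

Section Prepend.

Variables (K : realType) (nx nu mu p q r : nat).
Variables (A : 'M[K]_nx) (B : 'M[K]_(nx, nu + mu)).
Variables (F : 'M[K]_(p, nx)) (G : 'M[K]_(p, nu + mu)) (h : 'cV[K]_p).
Variables (Q : 'M[K]_(q, nx)) (Rw : 'M[K]_(r, nu + mu)).

Lemma feasible_prepend T x0 u0 xs us :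
  inD F G h x0 u0 -> binary_vec (selV u0) ->
  feasible A B F G h T (A *m x0 + B *m u0) xs us ->
  feasible A B F G h T x0 (prepend x0 xs) (prepend u0 us).
Proof.
move=> xu0D u0bin [xs0 xs_feas]; split=> // -[|t] tT /=.
  by rewrite xs0.
exact: xs_feas (ltnW tT).
Qed.

Lemma cost_prepend_le T x0 u0 xs us :
  cost Q Rw T (prepend x0 xs) (prepend u0 us)
    <= sqnorm (Q *m x0) + sqnorm (Rw *m u0) + cost Q Rw T xs us.
Proof.
rewrite /cost addrACA lerD //.
  exact: sum_prepend_le (fun x => sqnorm_ge0 (Q *m x)).
exact: sum_prepend_le (fun u => sqnorm_ge0 (Rw *m u)).
Qed.

Lemma theta_le_cost T xi xs us :
  feasible A B F G h T xi xs us ->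
  (theta A B F G h Q Rw T xi <= (cost Q Rw T xs us)%:E)%E.
Proof. by move=> feas; apply: ereal_inf_lbound; exists xs, us. Qed.

End Prepend.

Theorem lemma2 (K : realType) (nx nu mu p q r T : nat)
  (A : 'M[K]_nx) (B : 'M[K]_(nx, nu + mu))
  (F : 'M[K]_(p, nx)) (G : 'M[K]_(p, nu + mu)) (h : 'cV[K]_p)
  (Q : 'M[K]_(q, nx)) (Rw : 'M[K]_(r, nu + mu))
  (hT : (0 < T)%N)
  (hD0 : inD F G h 0 0)
  (x0 : 'cV[K]_nx) (u0 : 'cV[K]_(nu + mu))
  (hu0 : binary_vec (selV u0))
  (hxu0 : inD F G h x0 u0) :
  let x1 := (A *m x0 + B *m u0)%R in
  (theta A B F G h Q Rw T x0
     - ((sqnorm (Q *m x0) + sqnorm (Rw *m u0))%R)%:E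
   <= theta A B F G h Q Rw T x1)%E.
Proof.
apply/ereal_infP => _ [xs [us [feas ->]]].
rewrite lee_subel_addr // -EFinD addrC.
apply: le_trans (theta_le_cost Q Rw (feasible_prepend hxu0 hu0 feas)) _.
by rewrite lee_fin cost_prepend_le.
Qed.
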